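(* Let $\mathbf A,\mathbf B$ be complete perfect DInFL-algebras and $h:\mathbf A\to\mathbf B$ a complete homomorphism. Define $h_+:J^\infty(\mathbf B)\to J^\infty(\mathbf A)$ by $h_+(b)=\bigwedge\{a\in A\mid b\leqslant h(a)\}$. Then: (i) $h_+$ is a DInFL-frame morphism from $\mathbf B_+$ to $\mathbf A_+$; (ii) if $h$ is injective then $h_+$ is surjective; (iii) if $h$ is surjective then $h_+$ is an order-embedding (with respect to the orders $\preccurlyeq$ of $\mathbf B_+$ and $\mathbf A_+$).
   Context: An InFL-algebra is $(A,\wedge,\vee,\cdot,1,\sim,-)$ with a lattice, a monoid, and $a\cdot b\leqslant c\iff a\leqslant -(b\cdot{\sim}c)\iff b\leqslant{\sim}(-c\cdot a)$; DInFL means distributive lattice reduct. Complete perfect: complete, every element the join of completely join-irreducibles ($J^\infty$) below it and meet of completely meet-irreducibles above it. A complete homomorphism preserves all operations and arbitrary joins and meets. $\kappa(j)=\bigvee\{a\mid j\not\leqslant a\}$. For a complete perfect DInFL-algebra $\mathbf A$, $\mathbf A_+=(J^\infty(\mathbf A),I_1,\preccurlyeq,\circ,{}^\sim,{}^-)$ with $I_1=\{i\in J^\infty(\mathbf A)\mid i\leqslant 1\}$, $a\preccurlyeq b$ iff $b\leqslant a$, $c\in a\circ b$ iff $c\leqslant a\cdot b$, $a^\sim={\sim}\kappa(a)$, $a^-=-\kappa(a)$. A DInFL-frame morphism between structures $(W_1,I_1,\preccurlyeq_1,\circ_1,{}^{\sim_1},{}^{-_1})$ and $(W_2,I_2,\preccurlyeq_2,\circ_2,{}^{\sim_2},{}^{-_2})$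 (with $\circ_i:W_i\times W_i\to\mathcal P(W_i)$) is a function $f:W_1\to W_2$ such that for all $x,y,z\in W_1$, $u,v\in W_2$: (M1) $x\preccurlyeq_1 y$ implies $f(x)\preccurlyeq_2 f(y)$; (M2) $z\in x\circ_1 y$ implies $f(z)\in f(x)\circ_2 f(y)$; (M3) if $f(z)\in u\circ_2 v$ then there exist $x,y\in W_1$ with $u\preccurlyeq_2 f(x)$, $v\preccurlyeq_2 f(y)$, $z\in x\circ_1 y$; (M4) $f(x^{\sim_1})=f(x)^{\sim_2}$; (M5) $f(x^{-_1})=f(x)^{-_2}$; (M6) $I_1=f^{-1}[I_2]$. *)

Set Implicit Arguments.

(* The lattice order is a <= b :<-> a /\ b = a. *)
Record DInFL := {
  car :> Type;
  meet : car -> car -> car;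
  join : car -> car -> car;
  mul  : car -> car -> car;
  one  : car;
  tilde : car -> car;
  minus : car -> car;
  meet_comm : forall a b, meet a b = meet b a;
  meet_assoc : forall a b c, meet a (meet b c) = meet (meet a b) c;
  join_comm : forall a b, join a b = join b a;
  join_assoc : forall a b c, join a (join b c) = join (join a b) c;
  absorb_mj : forall a b, meet a (join a b) = a;
  absorb_jm : forall a b, join a (meet a b) = a;
  distr : forall a b c, meet a (join b c) = join (meet a b) (meet a c);
  mul_assoc : forall a b c, mul a (mul b c) = mul (mul a b) c;
  mul_1l : forall a, mul one a = a;
  mul_1r : forall a, mul a one = a;
  resid1 : forall a b c, meet (mul a b) c = mul a b <->
                         meet a (minus (mul b (tilde c))) = a;
  resid2 : forall a b c, meet (mul a b) c = mul a b <->
                         meet b (tilde (mul (minus c) a)) = b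
}.

Arguments meet {_}. Arguments join {_}. Arguments mul {_}.
Arguments tilde {_}. Arguments minus {_}.

Definition le {A : DInFL} (a b : A) : Prop := meet a b = a.

Definition is_lub {A : DInFL} (S : A -> Prop) (s : A) : Prop :=
  (forall x, S x -> le x s) /\ (forall u, (forall x, S x -> le x u) -> le s u).
Definition is_glb {A : DInFL} (S : A -> Prop) (s : A) : Prop :=
  (forall x, S x -> le s x) /\ (forall u, (forall x, S x -> le u x) -> le u s).

Record cDInFL := {
  alg :> DInFL;
  csup : (alg -> Prop) -> alg;
  cinf : (alg -> Prop) -> alg;
  csup_lub : forall S, is_lub S (csup S);
  cinf_glb : forall S, is_glb S (cinf S)
}.

Arguments csup : clear implicits. Arguments cinf : clear implicits.

Definition cji {A : cDInFL} (j : A) : Prop :=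
  forall S : A -> Prop, j = csup A S -> S j.
Definition cmi {A : cDInFL} (m : A) : Prop :=
  forall S : A -> Prop, m = cinf A S -> S m.

Definition perfect (A : cDInFL) : Prop :=
  (forall a : A, a = csup A (fun j => cji j /\ le j a)) /\
  (forall a : A, a = cinf A (fun m => cmi m /\ le a m)).

Definition image (A B : Type) (h : A -> B) (S : A -> Prop) : B -> Prop :=
  fun y => exists x, S x /\ y = h x.

Definition complete_hom {A B : cDInFL} (h : A -> B) : Prop :=
  (forall a b, h (meet a b) = meet (h a) (h b)) /\
  (forall a b, h (join a b) = join (h a) (h b)) /\
  (forall a b, h (mul a b) = mul (h a) (h b)) /\
  h (one A) = one B /\
  (forall a, h (tilde a) = tilde (h a)) /\
  (forall a, h (minus a) = minus (h a)) /\
  (forall S, h (csup A S) = csup B (image h S)) /\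
  (forall S, h (cinf A S) = cinf B (image h S)).

Definition kappa {A : cDInFL} (j : A) : A :=
  csup A (fun a => ~ le j a).

(* A frame is presented on an ambient type [W] together with a predicate [Wd]
   carving out the actual underlying set. [circ x y z] means z ∈ x ∘ y. *)
Record frame := {
  W : Type;
  Wd : W -> Prop;
  fI : W -> Prop;
  prec : W -> W -> Prop;
  circ : W -> W -> W -> Prop;
  ftil : W -> W;
  fmin : W -> W
}.

Arguments Wd {_}. Arguments fI {_}. Arguments prec {_}. Arguments circ {_}.
Arguments ftil {_}. Arguments fmin {_}.

(* The dual frame A_+ of a complete perfect DInFL-algebra, with underlying
   set J^infty(A). *)
Definition plus (A : cDInFL) : frame := {|
  W := A;
  Wd := fun j => cji j;
  fI := fun i => cji i /\ le i (one A);
  prec := fun a b => le b a;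
  circ := fun a b c => le c (mul a b);
  ftil := fun a => tilde (kappa a);
  fmin := fun a => minus (kappa a)
|}.

(* DInFL-frame morphism (M1)-(M6), together with the requirement that f maps
   the underlying set of F1 into that of F2. *)
Definition frame_morphism {F1 F2 : frame} (f : W F1 -> W F2) : Prop :=
  (forall x, Wd x -> Wd (f x)) /\
  (forall x y, Wd x -> Wd y -> prec x y -> prec (f x) (f y)) /\
  (forall x y z, Wd x -> Wd y -> Wd z -> circ x y z -> circ (f x) (f y) (f z)) /\
  (forall z u v, Wd z -> Wd u -> Wd v -> circ u v (f z) ->
     exists x y, Wd x /\ Wd y /\ prec u (f x) /\ prec v (f y) /\ circ x y z) /\
  (forall x, Wd x -> f (ftil x) = ftil (f x)) /\
  (forall x, Wd x -> f (fmin x) = fmin (f x)) /\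
  (forall x, Wd x -> (fI x <-> fI (f x))).

Definition hplus {A B : cDInFL} (h : A -> B) (b : B) : A :=
  cinf A (fun a => le b (h a)).

(* The map h_+ is the lower adjoint of h: h_+(b) <= a iff b <= h(a).  In a
   perfect distributive lattice the completely join-irreducibles are completely
   join-prime, which together with the adjunction makes h_+ preserve J^oo and
   lets every frame condition be transported through h; kappa(j) is then the
   largest element not above j, so the conditions on ~ and - reduce to
   "a <= kappa j iff not j <= a".  If h is injective, h(a) lies strictly above
   h(kappa a) for a in J^oo(A), and any join-irreducible of B witnessing this is
   mapped to a; if h is surjective, the adjunction reflects the order. *)
From Stdlib Require Import Classical.

Section Lattice.
Context {A : DInFL}.
Implicit Types a b c : A.

Lemma le_refl a : le a a.
Proof. unfold le. rewrite <- (absorb_jm A a a) at 2. apply absorb_mj. Qed.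

Lemma le_antisym a b : le a b -> le b a -> a = b.
Proof. unfold le. intros Hab Hba. rewrite <- Hab, meet_comm. exact Hba. Qed.

Lemma le_trans {a b c} : le a b -> le b c -> le a c.
Proof. unfold le. intros Hab Hbc. rewrite <- Hab, <- meet_assoc, Hbc. reflexivity. Qed.

Lemma le_ext a b : (forall c, le a c <-> le b c) -> a = b.
Proof.
  intro H. apply le_antisym; [apply (proj2 (H b)) | apply (proj1 (H a))]; apply le_refl.
Qed.

Lemma meet_lb_l a b : le (meet a b) a.
Proof. unfold le. rewrite (meet_comm A _ a), meet_assoc, (le_refl a). reflexivity. Qed.

Lemma meet_lb_r a b : le (meet a b) b.
Proof. rewrite meet_comm. apply meet_lb_l. Qed.

Lemma le_meet a b c : le c a -> le c b -> le c (meet a b).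
Proof. unfold le. intros Hca Hcb. rewrite meet_assoc, Hca. exact Hcb. Qed.

Lemma join_ub_l a b : le a (join a b).
Proof. apply absorb_mj. Qed.

Lemma le_iff_join a b : le a b <-> join a b = b.
Proof.
  unfold le. split; intro H.
  - rewrite <- H, join_comm, meet_comm. apply absorb_jm.
  - rewrite <- H. apply absorb_mj.
Qed.

Lemma join_meet_distr a b c : join a (meet b c) = meet (join a b) (join a c).
Proof.
  rewrite distr, (meet_comm A _ a), absorb_mj, (meet_comm A (join a b) c), distr.
  rewrite join_assoc, (meet_comm A c a), absorb_jm, (meet_comm A c b).
  reflexivity.
Qed.

End Lattice.

Section Residuation.
Context {A : DInFL}.
Implicit Types a b c : A.

Lemma mul_mono_l {a a'} b : le a a' -> le (mul a b) (mul a' b).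
Proof. intro H. apply resid1, (le_trans H), resid1, le_refl. Qed.

Lemma mul_mono_r a {b b'} : le b b' -> le (mul a b) (mul a b').
Proof. intro H. apply resid2, (le_trans H), resid2, le_refl. Qed.

Lemma tildeK c : tilde (minus c) = c.
Proof.
  assert (E : forall b, le b c <-> le b (tilde (minus c))).
  { intro b. pose proof (resid2 A (one A) b c) as R.
    unfold le. rewrite mul_1l, mul_1r in R. exact R. }
  apply le_antisym; [apply (proj2 (E _)) | apply E]; apply le_refl.
Qed.

Lemma minusK c : minus (tilde c) = c.
Proof.
  assert (E : forall b, le b c <-> le b (minus (tilde c))).
  { intro b. pose proof (resid1 A b (one A) c) as R.
    unfold le. rewrite mul_1l, mul_1r in R. exact R. }
  apply le_antisym; [apply (proj2 (E _)) | apply E]; apply le_refl.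
Qed.

Lemma minus_anti {a b} : le a b -> le (minus b) (minus a).
Proof.
  (* [- y] is the largest [x] with [x * y <= - 1], since [~ (- 1) = 1]. *)
  assert (R : forall x y, le (mul x y) (minus (one A)) <-> le x (minus y)).
  { intros x y. pose proof (resid1 A x y (minus (one A))) as R.
    unfold le. rewrite tildeK, mul_1r in R. exact R. }
  intro H. apply R, (le_trans (mul_mono_r _ H)), R, le_refl.
Qed.

Lemma tilde_anti {a b} : le a b -> le (tilde b) (tilde a).
Proof.
  assert (R : forall x y, le (mul x y) (tilde (one A)) <-> le y (tilde x)).
  { intros x y. pose proof (resid2 A x y (tilde (one A))) as R.
    unfold le. rewrite minusK, mul_1l in R. exact R. }
  intro H. apply R, (le_trans (mul_mono_l _ H)), R, le_refl.
Qed.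

Lemma tilde_le_iff a b : le (tilde a) b <-> le (minus b) a.
Proof.
  split; intro H.
  - rewrite <- (minusK a). exact (minus_anti H).
  - rewrite <- (tildeK b). exact (tilde_anti H).
Qed.

Lemma minus_le_iff a b : le (minus a) b <-> le (tilde b) a.
Proof.
  split; intro H.
  - rewrite <- (tildeK a). exact (tilde_anti H).
  - rewrite <- (minusK b). exact (minus_anti H).
Qed.

End Residuation.

Section Complete.
Context {A : cDInFL}.
Implicit Types (a b j m : A) (S : A -> Prop).

Lemma csup_ub S a : S a -> le a (csup A S).
Proof. apply (proj1 (csup_lub A S)). Qed.

Lemma csup_le S a : (forall x, S x -> le x a) -> le (csup A S) a.
Proof. apply (proj2 (csup_lub A S)). Qed.

Lemma cinf_lb S a : S a -> le (cinf A S) a.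
Proof. apply (proj1 (cinf_glb A S)). Qed.

Lemma le_cinf S a : (forall x, S x -> le a x) -> le a (cinf A S).
Proof. apply (proj2 (cinf_glb A S)). Qed.

Lemma mul_csup_le (X Y : A -> Prop) c :
  (forall x y, X x -> Y y -> le (mul x y) c) -> le (mul (csup A X) (csup A Y)) c.
Proof.
  intro H. apply resid1, csup_le. intros x Hx.
  apply resid1, resid2, csup_le. intros y Hy.
  apply resid2, H; assumption.
Qed.

Lemma cji_strict_below {j} :
  cji j -> le (csup A (fun x => le x j /\ x <> j)) j /\
           csup A (fun x => le x j /\ x <> j) <> j.
Proof.
  intro Hj. split.
  - apply csup_le. intros x [Hx _]. exact Hx.
  - intro E. symmetry in E. destruct (Hj _ E) as [_ Hne]. exact (Hne eq_refl).
Qed.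

Lemma cmi_strict_above {m} :
  cmi m -> le m (cinf A (fun x => le m x /\ x <> m)) /\
           cinf A (fun x => le m x /\ x <> m) <> m.
Proof.
  intro Hm. split.
  - apply le_cinf. intros x [Hx _]. exact Hx.
  - intro E. symmetry in E. destruct (Hm _ E) as [_ Hne]. exact (Hne eq_refl).
Qed.

(* The meet of the strict upper bounds of [m] lies below both [join m a] and
   [join m b], hence below [join m (meet a b) = m]. *)
Lemma cmi_meet_prime {m a b} :
  cmi m -> le (meet a b) m -> le a m \/ le b m.
Proof.
  intros Hm Hab. apply NNPP. intro Hn. apply not_or_and in Hn as [Ha Hb].
  destruct (cmi_strict_above Hm) as [Hm_above Hne].
  set (ms := cinf A _) in Hm_above, Hne.
  assert (Hms : forall c, ~ le c m -> le ms (join m c)).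
  { intros c Hc. apply cinf_lb. split; [apply join_ub_l |].
    intro E. apply Hc. apply le_iff_join. rewrite join_comm. exact E. }
  apply Hne, le_antisym; [| exact Hm_above].
  rewrite le_iff_join in Hab. rewrite join_comm in Hab.
  rewrite <- Hab, join_meet_distr. apply le_meet; apply Hms; assumption.
Qed.

Section Perfect.
Hypothesis PA : perfect A.

Lemma cji_separated_by_cmi {j} :
  cji j -> exists m, cmi m /\ ~ le j m /\
    forall a, ~ le j a -> le (meet j a) m.
Proof.
  intro Hj. destruct (cji_strict_below Hj) as [Hjs_le Hjs_ne].
  set (js := csup A _) in Hjs_le, Hjs_ne.
  apply NNPP. intro Hno. apply Hjs_ne, le_antisym; [exact Hjs_le |].
  rewrite (proj2 PA js). apply le_cinf. intros m [Hm Hjsm].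
  apply NNPP. intro Hjm. apply Hno. exists m. repeat split; [assumption..|].
  intros a Ha. apply (le_trans (b := js)); [| exact Hjsm].
  apply csup_ub. split; [apply meet_lb_l |].
  intro E. apply Ha. rewrite <- E. apply meet_lb_r.
Qed.

Lemma cji_join_prime {j S} :
  cji j -> le j (csup A S) -> exists s, S s /\ le j s.
Proof.
  intros Hj HS. apply NNPP. intro Hno.
  destruct (cji_separated_by_cmi Hj) as (m & Hm & Hjm & Hbelow).
  apply Hjm, (le_trans HS), csup_le. intros s Hs.
  assert (Hjs : ~ le j s) by (intro Hjs; apply Hno; exists s; auto).
  destruct (cmi_meet_prime Hm (Hbelow s Hjs)) as [Hj' | Hs']; [contradiction | exact Hs'].
Qed.

Lemma le_kappa_iff j a : cji j -> le a (kappa j) <-> ~ le j a.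
Proof.
  intro Hj. split.
  - intros Ha Hja. destruct (cji_join_prime (S := fun a => ~ le j a) Hj (le_trans Hja Ha))
      as [s [Hs Hjs]]. exact (Hs Hjs).
  - intro Ha. apply csup_ub. exact Ha.
Qed.

End Perfect.

Lemma join_prime_cji j :
  (forall S, le j (csup A S) -> exists s, S s /\ le j s) -> cji j.
Proof.
  intros H S E. destruct (H S) as [s [Hs Hjs]]; [rewrite <- E; apply le_refl |].
  replace j with s; [exact Hs |].
  apply le_antisym; [rewrite E; apply csup_ub |]; assumption.
Qed.

End Complete.

Section DualMap.
Context {A B : cDInFL} {h : A -> B}.
Hypothesis Hh : complete_hom h.

Lemma hom_mono {a a'} : le a a' -> le (h a) (h a').
Proof. destruct Hh as [Hmeet _]. unfold le. intro H. rewrite <- Hmeet, H. reflexivity. Qed.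

Lemma hplus_le_iff b a : le (hplus h b) a <-> le b (h a).
Proof.
  destruct Hh as (_ & _ & _ & _ & _ & _ & _ & Hinf). split; intro H.
  - apply (le_trans (b := h (hplus h b))); [| exact (hom_mono H)].
    unfold hplus. rewrite Hinf. apply le_cinf. intros y [x [Hx ->]]. exact Hx.
  - apply cinf_lb. exact H.
Qed.

Lemma le_h_hplus b : le b (h (hplus h b)).
Proof. apply hplus_le_iff, le_refl. Qed.

Lemma hplus_mono b b' : le b b' -> le (hplus h b) (hplus h b').
Proof. intro H. apply hplus_le_iff, (le_trans H), le_h_hplus. Qed.

Section PerfectAlgebras.
Hypotheses (PA : perfect A) (PB : perfect B).

Lemma hplus_cji b : cji b -> cji (hplus h b).
Proof.
  destruct Hh as (_ & _ & _ & _ & _ & _ & Hsup & _).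
  intro Hb. apply join_prime_cji. intros S HS.
  rewrite hplus_le_iff, Hsup in HS.
  destruct (cji_join_prime PB Hb HS) as [t [[s [Hs ->]] Hbt]].
  exists s. split; [exact Hs |]. apply hplus_le_iff. exact Hbt.
Qed.

Lemma hplus_mul b1 b2 c :
  le c (mul b1 b2) -> le (hplus h c) (mul (hplus h b1) (hplus h b2)).
Proof.
  destruct Hh as (_ & _ & Hmul & _). intro Hc.
  apply hplus_le_iff. rewrite Hmul. apply (le_trans Hc).
  apply (le_trans (mul_mono_l _ (le_h_hplus b1))), mul_mono_r, le_h_hplus.
Qed.

(* [h u] and [h v] are joins of join-irreducibles, so [mul (h u) (h v)] lies
   below the join of their pairwise products, and [z] is below one of them. *)
Lemma hplus_mul_back {z u v} :
  cji z -> le (hplus h z) (mul u v) ->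
  exists x y, cji x /\ cji y /\ le x (h u) /\ le y (h v) /\ le z (mul x y).
Proof.
  destruct Hh as (_ & _ & Hmul & _). intros Hz Huv.
  apply hplus_le_iff in Huv. rewrite Hmul in Huv.
  set (X := fun x => cji x /\ le x (h u)).
  set (Y := fun y => cji y /\ le y (h v)).
  set (T := fun t => exists x y, X x /\ Y y /\ t = mul x y).
  assert (HT : le (mul (h u) (h v)) (csup B T)).
  { rewrite (proj1 PB (h u)), (proj1 PB (h v)).
    apply mul_csup_le. intros x y Hx Hy. apply csup_ub. exists x, y. auto. }
  destruct (cji_join_prime PB Hz (le_trans Huv HT))
    as [t [(x & y & [Hx Hxu] & [Hy Hyv] & ->) Hzt]].
  exists x, y. auto.
Qed.

Lemma hplus_tilde_kappa b :
  cji b -> hplus h (tilde (kappa b)) = tilde (kappa (hplus h b)).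
Proof.
  destruct Hh as (_ & _ & _ & _ & _ & Hminus & _). intro Hb.
  apply le_ext. intro a.
  pose proof (hplus_cji b Hb) as Hb'.
  rewrite hplus_le_iff, !tilde_le_iff, (le_kappa_iff PB b _ Hb),
    (le_kappa_iff PA _ _ Hb'), <- Hminus, hplus_le_iff.
  reflexivity.
Qed.

Lemma hplus_minus_kappa b :
  cji b -> hplus h (minus (kappa b)) = minus (kappa (hplus h b)).
Proof.
  destruct Hh as (_ & _ & _ & _ & Htilde & _). intro Hb.
  apply le_ext. intro a.
  pose proof (hplus_cji b Hb) as Hb'.
  rewrite hplus_le_iff, !minus_le_iff, (le_kappa_iff PB b _ Hb),
    (le_kappa_iff PA _ _ Hb'), <- Htilde, hplus_le_iff.
  reflexivity.
Qed.

End PerfectAlgebras.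

Lemma hplus_le_one b : le (hplus h b) (one A) <-> le b (one B).
Proof. destruct Hh as (_ & _ & _ & Hone & _). rewrite hplus_le_iff, Hone. reflexivity. Qed.

Lemma hplus_frame_morphism :
  perfect A -> perfect B -> @frame_morphism (plus B) (plus A) (hplus h).
Proof.
  intros PA PB. unfold frame_morphism; simpl.
  split; [| split; [| split; [| split; [| split; [| split]]]]].
  - exact (hplus_cji PB).
  - intros x y _ _. apply hplus_mono.
  - intros x y z _ _ _. apply hplus_mul.
  - intros z u v Hz _ _ Huv.
    destruct (hplus_mul_back PB Hz Huv) as (x & y & Hx & Hy & Hxu & Hyv & Hz').
    exists x, y. rewrite !hplus_le_iff. auto.
  - exact (hplus_tilde_kappa PA PB).
  - exact (hplus_minus_kappa PA PB).
  - intros x Hx. rewrite hplus_le_one.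
    split; intros [_ H]; split; auto. exact (hplus_cji PB x Hx).
Qed.

Lemma hplus_surjective_of_injective :
  perfect A -> perfect B -> (forall a1 a2, h a1 = h a2 -> a1 = a2) ->
  forall a, cji a -> exists b, cji b /\ hplus h b = a.
Proof.
  destruct Hh as (Hmeet & _). intros PA PB Hinj a Ha.
  assert (Hgap : ~ le (h a) (h (kappa a))).
  { intro E. apply (proj1 (le_kappa_iff PA a (kappa a) Ha) (le_refl _)).
    apply Hinj. rewrite Hmeet. exact E. }
  apply NNPP. intro Hno. apply Hgap.
  rewrite (proj1 PB (h a)) at 1. apply csup_le. intros b [Hb Hba].
  apply NNPP. intro Hbk. apply Hno. exists b. split; [exact Hb |].
  apply le_antisym; [apply hplus_le_iff; exact Hba |].
  apply NNPP. intro Hn. apply Hbk, hplus_le_iff, le_kappa_iff; assumption.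
Qed.

Lemma hplus_order_reflecting :
  (forall b, exists a, h a = b) ->
  forall x y, le (hplus h y) (hplus h x) -> le y x.
Proof.
  intros Hsurj x y H. destruct (Hsurj x) as [a <-].
  apply hplus_le_iff, (le_trans H), hplus_le_iff, le_refl.
Qed.

End DualMap.

Theorem mainTheorem15 (A B : cDInFL) (h : A -> B) :
  perfect A -> perfect B -> complete_hom h ->
  @frame_morphism (plus B) (plus A) (hplus h) /\
  ((forall a1 a2 : A, h a1 = h a2 -> a1 = a2) ->
     forall a : A, cji a -> exists b : B, cji b /\ hplus h b = a) /\
  ((forall b : B, exists a : A, h a = b) ->
     forall x y : B, cji x -> cji y ->
       (le y x <-> le (hplus h y) (hplus h x))).
Proof.
  intros PA PB Hh. split; [| split].
  - exact (hplus_frame_morphism Hh PA PB).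
  - exact (hplus_surjective_of_injective Hh PA PB).
  - intros Hsurj x y _ _. split.
    + exact (hplus_mono Hh y x).
    + exact (hplus_order_reflecting Hh Hsurj x y).
Qed.
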